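(* Let $X$ be a Banach space. If every point of the unit sphere $S_X$ is a strongly exposed point of $B_X$, then $X$ has property [P].
   Context: A point $x_0\in B_X$ is strongly exposed if there is $x^*\in X^*$ with $\operatorname{Re}x^*(x_0)=\sup_{B_X}\operatorname{Re}x^*$ such that every sequence $\{x_n\}\subset B_X$ with $\operatorname{Re}x^*(x_n)\to\operatorname{Re}x^*(x_0)$ converges in norm to $x_0$; such $x^*$ is a strongly exposing functional, and $\operatorname{SE}(X)$ denotes the set of strongly exposing functionals. $X$ has property [P] if there is a function $\varepsilon\in(0,1)\mapsto\eta(\varepsilon)>0$ such that whenever $x\in S_X$, $x^*\in S_{X^*}$ satisfy $\operatorname{Re}x^*(x)>1-\eta(\varepsilon)$, there exist $y^*\in\operatorname{SE}(X)$ and $y\in S_X$ with $\|y^*\|=y^*(y)=1$, $\|y^*-x^*\|<\varepsilon$ and $\|y-x\|<\varepsilon$. *)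

From HB Require Import structures.
From mathcomp Require Import all_boot all_order all_algebra.
From mathcomp Require Import all_classical all_reals all_analysis.
From mathcomp Require Import complex.
Set Implicit Arguments. Unset Strict Implicit. Unset Printing Implicit Defensive.
Import Order.TTheory GRing.Theory Num.Theory.
Import numFieldNormedType.Exports.
Local Open Scope classical_set_scope.
Local Open Scope ring_scope.

(* Generic setting: a normed space X over a scalar field K (K = R or K = R[i]),
   with a "real part" map [re : K -> K] (identity for K = R, z |-> (Re z)%:C
   for K = R[i]).  Norms take values in K (real values). *)
Section BanachDefs.
Variables (K : numFieldType) (X : normedModType K) (re : K -> K).

Definition dual_elt (f : {scalar X}) : Prop := continuous f.

Definition dnorm_is (f : X -> K) (c : K) : Prop :=
  (forall x : X, `|x| <= 1 -> `|f x| <= c) /\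
  (forall d : K, (forall x : X, `|x| <= 1 -> `|f x| <= d) -> c <= d).

Definition dnorm_lt (f : X -> K) (e : K) : Prop :=
  exists c : K, dnorm_is f c /\ c < e.

Definition attains_sup_re (f : X -> K) (x0 : X) : Prop :=
  `|x0| <= 1 /\ forall x : X, `|x| <= 1 -> re (f x) <= re (f x0).

Definition strongly_exposes (f : {scalar X}) (x0 : X) : Prop :=
  dual_elt f /\ attains_sup_re f x0 /\
  forall u : nat -> X, (forall n, `|u n| <= 1) ->
    (re (f (u n)) @[n --> \oo] --> re (f x0)) -> (u n @[n --> \oo] --> x0).

Definition strongly_exposed_point (x0 : X) : Prop :=
  exists f : {scalar X}, strongly_exposes f x0.

Definition SE (f : {scalar X}) : Prop := exists x0 : X, strongly_exposes f x0.

Definition property_P : Prop :=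
  exists eta : K -> K,
    (forall e : K, 0 < e < 1 -> 0 < eta e) /\
    forall e : K, 0 < e < 1 ->
    forall (x : X) (f : {scalar X}),
      dual_elt f -> `|x| = 1 -> dnorm_is f 1 -> re (f x) > 1 - eta e ->
      exists (g : {scalar X}) (y : X),
        SE g /\ `|y| = 1 /\ dnorm_is g 1 /\ g y = 1 /\
        dnorm_lt (g \- f) e /\ `|y - x| < e.

End BanachDefs.

Definition re_real (R : realType) : R -> R := fun z => z.
Definition re_cplx (R : realType) : R[i] -> R[i] := fun z => 'Re z.

(* If [Re f x] is close to 1, the Bishop-Phelps-Bollobas theorem, applied to the real
   functional [Re f] on [X] seen as a real space, gives a real functional [psi] of norm one
   attaining its norm at a point [y] of the sphere, with [psi] close to [Re f] and [y] close to
   [x]. It is proved with the Bishop-Phelps cone [{v | |v| <= k Re f v}]: completeness yields a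
   point [y] of the unit ball that is maximal for the cone order, and Hahn-Banach a functional
   [psi] supporting the ball at [y] and nonnegative on the cone, hence small on the kernel of
   [Re f] and therefore close to [Re f].
   By hypothesis [y] is strongly exposed by some [h], and [Re h y > 0]. For small [t > 0] the
   complexification [G] of [(psi + t Re h) / (1 + t Re h y)] still attains its norm at [y] and
   stays close to [psi]; it strongly exposes [y] because its gap [1 - Re G v] dominates the gap
   [Re h y - Re h v] of [h]. *)

From HB Require Import structures.
From mathcomp Require Import all_boot all_order all_algebra.
From mathcomp Require Import all_classical all_reals all_analysis.
From mathcomp Require Import complex.
From mathcomp Require Import ring lra.
Set Implicit Arguments. Unset Strict Implicit. Unset Printing Implicit Defensive.
Import Order.TTheory GRing.Theory Num.Theory.
Import numFieldNormedType.Exports.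
Local Open Scope classical_set_scope.
Local Open Scope ring_scope.

Section ArchimedeanBounds.
Variable R : realType.

(* named, so that arithmetic tactics treat [1 / n.+1] as a single atom *)
Definition tol (n : nat) : R := n.+1%:R^-1.

Lemma tol_gt0 n : 0 < tol n.
Proof. by rewrite invr_gt0 ltr0n. Qed.

Lemma exists_tol_lt (C e : R) : 0 < e -> exists n, C * tol n < e.
Proof.
move=> e0; have := @archi_boundP _ (`|C| / e) (divr_ge0 (normr_ge0 C) (ltW e0)).
set n := Num.Def.archi_bound _ => hn; exists n.
have n1 : 0 < n.+1%:R :> R by rewrite ltr0n.
have nS : n%:R < n.+1%:R :> R by rewrite ltr_nat.
rewrite ltr_pdivrMr // in hn; rewrite ltr_pdivrMr //; have := ler_norm C; nra.
Qed.

Lemma le0_of_le_tol (a C : R) : (forall n, a <= C * tol n) -> a <= 0.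
Proof.
move=> h; rewrite leNgt; apply/negP => a0.
by have [n] := exists_tol_lt C a0; rewrite ltNge h.
Qed.

End ArchimedeanBounds.
Arguments tol {R} n.

Section IndexedInfimum.
Variables (R : realType) (T : Type).
Implicit Types (D : set T) (F : T -> R).

Definition iinf D F : R := inf [set F t | t in D].

Lemma iinf_le D F (b : R) t : (forall s, D s -> b <= F s) -> D t -> iinf D F <= F t.
Proof.
move=> Fb Dt; apply: ge_inf; last by exists t.
by exists b => _ [s Ds <-]; exact: Fb.
Qed.

Lemma le_iinf D F (b : R) : D !=set0 -> (forall s, D s -> b <= F s) -> b <= iinf D F.
Proof.
move=> [t Dt] bF; apply: lb_le_inf; first by exists (F t), t.
by move=> _ [s Ds <-]; exact: bF.
Qed.

Lemma le_iinfD D1 D2 F1 F2 (c : R) : D1 !=set0 -> D2 !=set0 ->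
  (forall s1 s2, D1 s1 -> D2 s2 -> c <= F1 s1 + F2 s2) -> c <= iinf D1 F1 + iinf D2 F2.
Proof.
move=> D1n0 D2n0 cF; rewrite -lerBlDr; apply: le_iinf => // s1 D1s1.
rewrite lerBlDr addrC -lerBlDr; apply: le_iinf => // s2 D2s2.
by rewrite lerBlDr addrC; exact: cF.
Qed.

Lemma le_iinfZ D F (a c : R) : 0 < a -> D !=set0 ->
  (forall s, D s -> c <= a * F s) -> c <= a * iinf D F.
Proof.
move=> a0 Dn0 cF; rewrite -ler_pdivrMl //; apply: le_iinf => // s Ds.
by rewrite ler_pdivrMl //; exact: cF.
Qed.

End IndexedInfimum.

Lemma linear_for_scalar (K : pzRingType) (V : lmodType K) (F : V -> K) :
  linear_for *%R F -> exists g : {linear V -> K | *%R}, g =1 F.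
Proof.
move=> lF; pose g : {linear V -> K | *%R} := HB.pack F (GRing.isLinear.Build K V K *%R F lF).
by exists g.
Qed.

Section HahnBanach.
Variables (R : realType) (V : lmodType R).
Implicit Types (p q r : V -> R) (x y : V).

Definition sublinear p := [/\ p 0 = 0, forall x y, p (x + y) <= p x + p y
  & forall a x, 0 < a -> p (a *: x) <= a * p x].

Lemma sublinearZ p a x : sublinear p -> 0 <= a -> p (a *: x) = a * p x.
Proof.
case=> p0 _ pZ; rewrite le_eqVlt => /orP[/eqP <-|a0]; first by rewrite scale0r p0 mul0r.
apply/eqP; rewrite eq_le pZ //=.
have := pZ a^-1 (a *: x); rewrite invr_gt0 scalerA mulVf ?gt_eqF // scale1r => /(_ a0).
by rewrite -(ler_pM2l a0) mulrA mulfV ?gt_eqF // mul1r.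
Qed.

Lemma sublinear_oppr_le p x : sublinear p -> - p (- x) <= p x.
Proof. by case=> p0 pD _; have := pD x (- x); rewrite subrr p0; lra. Qed.

(* [q] lowered in the direction [y], so that its value at [- y] drops to [- q y] *)
Definition sublinear_cut q y x : R :=
  iinf (fun t : R => 0 <= t) (fun t => q (x + t *: y) - t * q y).

Section Cut.
Variables (q : V -> R) (y : V).
Hypothesis sq : sublinear q.

Lemma sublinear_cut_lb x t : 0 <= t -> - q (- x) <= q (x + t *: y) - t * q y.
Proof.
move=> t0; case: sq => _ qD _; have := qD (x + t *: y) (- x).
by rewrite addrC addKr sublinearZ //; lra.
Qed.

Lemma sublinear_cut_le x : sublinear_cut q y x <= q x.
Proof.
have := iinf_le (sublinear_cut_lb x) (lexx 0).
by rewrite scale0r addr0 mul0r subr0.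
Qed.

Lemma sublinear_cut_oppr : sublinear_cut q y (- y) <= - q y.
Proof.
have := iinf_le (sublinear_cut_lb (- y)) ler01.
by case: sq => q0 _ _; rewrite scale1r addNr q0 mul1r sub0r.
Qed.

Lemma sublinear_cut_sublinear : sublinear (sublinear_cut q y).
Proof.
have nng0 : (fun t : R => 0 <= t) !=set0 by exists 0.
have cut_le x t : 0 <= t -> sublinear_cut q y x <= q (x + t *: y) - t * q y.
  exact: iinf_le (sublinear_cut_lb x).
case: (sq) => q0 qD qZ; split.
- apply/eqP; rewrite eq_le; apply/andP; split.
    by have := sublinear_cut_le 0; rewrite q0.
  by apply: le_iinf => // t t0; rewrite add0r sublinearZ // subrr.
- move=> x1 x2; apply: le_iinfD => // t1 t2 t1p t2p.
  apply: le_trans (cut_le _ _ (addr_ge0 t1p t2p)) _.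
  have := qD (x1 + t1 *: y) (x2 + t2 *: y).
  by rewrite addrACA -scalerDl; lra.
- move=> a x a0; apply: le_iinfZ => // t t0.
  apply: le_trans (cut_le _ (a * t) (mulr_ge0 (ltW a0) t0)) _.
  by rewrite -scalerA -scalerDr (sublinearZ _ sq (ltW a0)) mulrBr mulrA.
Qed.

End Cut.

Definition pointwise_le (r r' : V -> R) := forall x, r x <= r' x.

Lemma inf_chain_sublinear (A : set (V -> R)) (b : V -> R) : A !=set0 ->
  (forall r r', A r -> A r' -> pointwise_le r r' \/ pointwise_le r' r) ->
  (forall r, A r -> sublinear r /\ pointwise_le b r) ->
  sublinear (fun x => iinf A (fun r => r x)).
Proof.
move=> An0 Atot Asub.
have infA_le r x : A r -> iinf A (fun r => r x) <= r x.
  by move=> Ar; apply: (iinf_le (b := b x)) => // s /Asub[].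
case: (An0) => r0 Ar0; split.
- apply/eqP; rewrite eq_le; apply/andP; split.
    by have [[r00 _ _] _] := Asub _ Ar0; apply: le_trans (infA_le _ _ Ar0) _; rewrite r00.
  by apply: le_iinf => // s /Asub[[->]].
- move=> x y; apply: le_iinfD => // r1 r2 Ar1 Ar2.
  have [[_ r1D _] _] := Asub _ Ar1; have [[_ r2D _] _] := Asub _ Ar2.
  have [r12|r21] := Atot _ _ Ar1 Ar2.
  + by apply: le_trans (infA_le _ _ Ar1) _; apply: le_trans (r1D x y) _; rewrite lerD2l.
  + by apply: le_trans (infA_le _ _ Ar2) _; apply: le_trans (r2D x y) _; rewrite lerD2r.
- move=> a x a0; apply: le_iinfZ => // r Ar; apply: le_trans (infA_le _ _ Ar) _.
  by have [[_ _ ->]] := Asub _ Ar.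
Qed.

Lemma exists_minimal_sublinear p : sublinear p -> exists r,
  [/\ sublinear r, pointwise_le r p &
      forall r', sublinear r' -> pointwise_le r' r -> pointwise_le r r'].
Proof.
move=> sp.
pose T := {r : V -> R | sublinear r /\ pointwise_le r p}.
pose t0 : T := exist _ p (conj sp (fun x => lexx (p x))).
pose Rr (s t : T) : bool := `[< pointwise_le (sval t) (sval s) >].
have [[r [sr rp]] rmin] : exists t, premaximal Rr t.
  apply: (ZL_preorder t0) => [t|s t u /asboolP st /asboolP tu|A Atot].
  - by apply/asboolP => x.
  - by apply/asboolP => x; exact: le_trans (tu x) (st x).
  have [[s0 As0]|An0] := pselect (A !=set0); last first.
    by exists t0 => s As; exfalso; apply: An0; exists s.
  pose B := [set sval s | s in A].
  have sB : sublinear (fun x => iinf B (fun r => r x)).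
    apply: (inf_chain_sublinear (b := fun x => - p (- x))); first by exists (sval s0), s0.
    - move=> _ _ [s As <-] [t At <-].
      by case: (Atot _ _ As At) => /asboolP; [right|left].
    - move=> _ [[r [sr rp]] _ <-]; split => // x /=.
      by apply: le_trans (sublinear_oppr_le x sr); rewrite lerN2.
  have Ble s x : A s -> iinf B (fun r => r x) <= sval s x.
    move=> As; apply: (iinf_le (b := - p (- x))); last by exists s.
    move=> _ [[r [sr rp]] _ <-] /=.
    by apply: le_trans (sublinear_oppr_le x sr); rewrite lerN2.
  have Bp : pointwise_le (fun x => iinf B (fun r => r x)) p.
    by move=> x; exact: le_trans (Ble _ x As0) (proj2 (svalP s0) x).
  exists (exist _ _ (conj sB Bp) : T).
  by move=> s As; apply/asboolP => x; exact: Ble.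
exists r; split => // r' sr' r'r.
have r'p : pointwise_le r' p by move=> x; exact: le_trans (r'r x) (rp x).
by have /asboolP := rmin (exist _ r' (conj sr' r'p)) (asboolT r'r).
Qed.

Lemma minimal_sublinear_linear r : sublinear r ->
  (forall r', sublinear r' -> pointwise_le r' r -> pointwise_le r r') ->
  linear_for *%R r.
Proof.
move=> sr rmin.
have rN y : r (- y) = - r y.
  have := rmin _ (sublinear_cut_sublinear y sr) (sublinear_cut_le y sr) (- y).
  move/le_trans/(_ (sublinear_cut_oppr y sr)) => rNle.
  by apply/eqP; rewrite eq_le rNle /= lerNl sublinear_oppr_le.
have rD x y : r (x + y) = r x + r y.
  case: (sr) => _ rD _; apply/eqP; rewrite eq_le rD /=.
  by have := rD (- x) (- y); rewrite -opprD !rN -opprD lerN2.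
move=> a x y; rewrite rD; congr (_ + _).
have [a0|a0] := leP 0 a; first exact: sublinearZ.
have Na0 : 0 <= - a by rewrite oppr_ge0 ltW.
by rewrite -(opprK a) scaleNr rN (sublinearZ _ sr Na0) /=; ring.
Qed.

Theorem hahn_banach q y : sublinear q ->
  exists f : {linear V -> R | *%R}, (forall x, f x <= q x) /\ f y = q y.
Proof.
move=> sq; have [r [sr rle rmin]] := exists_minimal_sublinear (sublinear_cut_sublinear y sq).
have [f fr] := linear_for_scalar (minimal_sublinear_linear sr rmin).
have fle x : f x <= sublinear_cut q y x by rewrite fr; exact: rle.
exists f; split => [x|]; first exact: le_trans (fle x) (sublinear_cut_le y sq x).
apply/eqP; rewrite eq_le (le_trans (fle y) (sublinear_cut_le y sq y)) /=.
by have := le_trans (fle (- y)) (sublinear_cut_oppr y sq); rewrite linearN lerN2.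
Qed.

End HahnBanach.

Section BishopPhelpsBollobas.
Variables (R : realType) (V : lmodType R) (N : V -> R).
Hypotheses (N_ge0 : forall x, 0 <= N x) (N_triangle : forall x y, N (x + y) <= N x + N y)
  (NZ : forall a x, N (a *: x) = `|a| * N x) (N_eq0 : forall x, N x = 0 -> x = 0).

Definition N_cvg_to (u : nat -> V) (l : V) :=
  forall e, 0 < e -> exists M, forall n, (M <= n)%N -> N (u n - l) < e.

Definition N_cauchy (u : nat -> V) :=
  forall e, 0 < e -> exists M, forall m n, (M <= m)%N -> (M <= n)%N -> N (u m - u n) < e.

Hypothesis N_complete : forall u, N_cauchy u -> exists l, N_cvg_to u l.

Lemma N0 : N 0 = 0.
Proof. by rewrite -(scale0r 0) NZ normr0 mul0r. Qed.

Lemma N_opp x : N (- x) = N x.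
Proof. by rewrite -scaleN1r NZ normrN normr1 mul1r. Qed.

Lemma N_distC x y : N (x - y) = N (y - x).
Proof. by rewrite -N_opp opprB. Qed.

Lemma N_dist_triangle x y z : N (x - z) <= N (x - y) + N (y - z).
Proof. by have := N_triangle (x - y) (y - z); rewrite addrA subrK. Qed.

Section Cone.
Variables (phi : {linear V -> R | *%R}) (k : R).
Hypotheses (phi_le : forall x, phi x <= N x) (k_gt0 : 0 < k).

Definition cone v := N v <= k * phi v.

Lemma cone0 : cone 0.
Proof. by rewrite /cone N0 linear0 mulr0. Qed.

Lemma coneD v w : cone v -> cone w -> cone (v + w).
Proof.
by rewrite /cone linearD mulrDr => cv cw; apply: le_trans (N_triangle v w) (lerD cv cw).
Qed.

Lemma coneZ a v : 0 <= a -> cone v -> cone (a *: v).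
Proof. by rewrite /cone NZ linearZ /= => a0 cv; rewrite ger0_norm // mulrCA ler_wpM2l. Qed.

Lemma cone_phi_ge0 v : cone v -> 0 <= phi v.
Proof. by rewrite /cone => cv; rewrite -(pmulr_rge0 _ k_gt0); exact: le_trans (N_ge0 v) cv. Qed.

Definition above w z := N z <= 1 /\ cone (z - w).

Lemma above_trans a b c : above a b -> above b c -> above a c.
Proof. by move=> [_ cab] [Nc cbc]; split => //; have := coneD cbc cab; rewrite addrA subrK. Qed.

Lemma above_near_sup w n : N w <= 1 -> exists z,
  above w z /\ forall z', above w z' -> phi z' <= phi z + tol n.
Proof.
move=> Nw; pose E := [set phi z | z in above w].
have hsE : has_sup E.
  split; first by exists (phi w), w => //; split; rewrite // subrr; exact: cone0.
  by exists 1 => _ [z [Nz _] <-]; exact: le_trans (phi_le z) Nz.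
have [_ [z wz <-] supz] := sup_adherent (tol_gt0 _ n) hsE.
exists z; split => // z' wz'.
have z'_le : phi z' <= sup E by apply: sup_upper_bound => //; exists z'.
by apply: le_trans z'_le (ltW _); rewrite -ltrBlDr.
Qed.

Definition greedy_chain (u : nat -> V) := forall n, above (u n) (u n.+1) /\
  forall z, above (u n) z -> phi z <= phi (u n.+1) + tol n.

Lemma exists_greedy_chain x0 : N x0 <= 1 -> exists u, u 0%N = x0 /\ greedy_chain u.
Proof.
move=> Nx0.
have step (wn : V * nat) : exists z, N wn.1 <= 1 -> above wn.1 z /\
    forall z', above wn.1 z' -> phi z' <= phi z + tol wn.2.
  have [Nw|] := pselect (N wn.1 <= 1); last by exists wn.1.
  by have [z] := above_near_sup wn.2 Nw; exists z.
have [succ step_spec] := choice step.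
pose u := fix u n := if n is m.+1 then succ (u m, m) else x0.
have Nu n : N (u n) <= 1 by elim: n => // n Nun; have [[]] := step_spec (u n, n) Nun.
by exists u; split => // n; exact: step_spec (u n, n) (Nu n).
Qed.

Section GreedyChain.
Variable u : nat -> V.
Hypothesis gu : greedy_chain u.

Lemma greedy_chain_above n m : (n < m)%N -> above (u n) (u m).
Proof.
elim: m => // m IH; rewrite ltnS leq_eqVlt => /orP[/eqP <-|nm]; first exact: (gu n).1.
exact: above_trans (IH nm) (gu m).1.
Qed.

Lemma greedy_chain_dist n m : (n < m)%N -> N (u m - u n.+1) <= k * tol n.
Proof.
rewrite leq_eqVlt => /orP[/eqP <-|nm]; first by rewrite subrr N0 mulr_ge0 ?ltW ?tol_gt0.
have [_ cm] := greedy_chain_above nm; apply: le_trans cm _.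
rewrite linearB ler_pM2l // lerBlDl; exact: (gu n).2 (greedy_chain_above (ltnW nm)).
Qed.

Lemma greedy_chain_cauchy : N_cauchy u.
Proof.
move=> e e0; have [n ne] := exists_tol_lt (2 * k) e0.
exists n.+1 => p q np nq; apply: le_lt_trans (N_dist_triangle _ (u n.+1) _) _.
rewrite (N_distC (u n.+1)).
have := greedy_chain_dist np; have := greedy_chain_dist nq; move: ne.
by set b := tol n; lra.
Qed.

Section Limit.
Variable y : V.
Hypothesis uy : N_cvg_to u y.

Lemma greedy_limit_le1 : N y <= 1.
Proof.
apply/ler_addgt0Pr => e e0; have [M hM] := uy e0.
have := N_triangle (u M.+1) (y - u M.+1); rewrite addrC subrK N_distC.
by have := hM M.+1 (leqnSn M); have [[]] := gu M; lra.
Qed.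

Lemma greedy_limit_cone n : cone (y - u n).
Proof.
apply/ler_addgt0Pr => e e0; set d := e / (1 + k).
have d0 : 0 < d by rewrite divr_gt0 // addr_gt0.
have ed : (1 + k) * d = e by rewrite mulrC mulfVK // gt_eqF // addr_gt0.
have [M hM] := uy d0; pose m := maxn M n.+1.
have [_ cm] := greedy_chain_above (leq_maxr M n.+1 : (n < m)%N).
have umy : N (u m - y) < d := hM m (leq_maxl _ _).
have phi_um : k * (phi (u m) - phi y) <= k * d.
  by rewrite ler_pM2l //; have := phi_le (u m - y); rewrite linearB /=; lra.
have := N_dist_triangle y (u m) (u n); rewrite (N_distC y (u m)).
move: cm; rewrite /cone !linearB /=; nra.
Qed.

Lemma greedy_limit_maximal z : above y z -> z = y.
Proof.
move=> [Nz cz]; apply/eqP; rewrite -subr_eq0; apply/eqP/N_eq0.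
apply/eqP; rewrite eq_le N_ge0 andbT; apply: (@le0_of_le_tol _ _ k) => n.
have above_z : above (u n) z.
  by split => //; have := coneD cz (greedy_limit_cone n); rewrite addrA subrK.
have := (gu n).2 _ above_z; have := cone_phi_ge0 (greedy_limit_cone n.+1).
move: cz; rewrite /cone !linearB /= => cz h1 h2.
apply: le_trans cz _; rewrite ler_pM2l //; lra.
Qed.

End Limit.
End GreedyChain.

Theorem cone_maximal_above x0 : N x0 <= 1 ->
  exists y, above x0 y /\ forall z, above y z -> z = y.
Proof.
move=> Nx0; have [u [u0 gu]] := exists_greedy_chain Nx0.
have [y uy] := N_complete (greedy_chain_cauchy gu).
exists y; split; last exact: greedy_limit_maximal.
split; first exact: (greedy_limit_le1 gu uy).
by rewrite -u0; exact: (greedy_limit_cone gu uy).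
Qed.

Definition cone_gauge z := iinf cone (fun c => N (z + c)).

Lemma cone_gauge_le z c : cone c -> cone_gauge z <= N (z + c).
Proof. exact: (iinf_le (F := fun c => N (z + c)) (fun s _ => N_ge0 _)). Qed.

Lemma cone_gauge_leN z : cone_gauge z <= N z.
Proof. by have := cone_gauge_le z cone0; rewrite addr0. Qed.

Lemma cone_gauge_sublinear : sublinear cone_gauge.
Proof.
have cone_n0 : cone !=set0 by exists 0; exact: cone0.
split.
- apply/eqP; rewrite eq_le (le_trans (cone_gauge_leN 0)) ?N0 //=.
  by apply: le_iinf => // c _; exact: N_ge0.
- move=> x1 x2; apply: le_iinfD => // c1 c2 c1c c2c.
  by apply: le_trans (cone_gauge_le _ (coneD c1c c2c)) _; rewrite addrACA.
- move=> a x a0; apply: le_iinfZ => // c cc.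
  apply: le_trans (cone_gauge_le _ (coneZ (ltW a0) cc)) _.
  by rewrite -scalerDr NZ gtr0_norm.
Qed.

Section MaximalPoint.
Variables (y x0 : V).
Hypotheses (y_max : forall z, above y z -> z = y) (Ny : N y <= 1)
  (cone_x0 : cone x0) (phi_x0 : 0 < phi x0) (Nx0 : N x0 <= 1).

(* the gauge reaches 1 at [y]: otherwise [y] could be pushed further up along [x0] *)
Lemma cone_gauge_maximal : cone_gauge y = 1.
Proof.
apply/eqP; rewrite eq_le (le_trans (cone_gauge_leN y) Ny) /=.
apply: le_iinf; first by exists 0; exact: cone0.
move=> c cc; rewrite leNgt; apply/negP => Nyc.
pose t := 1 - N (y + c); have t0 : 0 < t by rewrite subr_gt0.
have above_z : above y (y + c + t *: x0).
  split; last by rewrite addrAC [y + c]addrC addrK; exact: coneD cc (coneZ (ltW t0) cone_x0).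
  apply: le_trans (N_triangle _ _) _; rewrite NZ gtr0_norm //.
  have : t * N x0 <= t by rewrite ger_pMr.
  rewrite /t; lra.
have ctx0 : c + t *: x0 = 0 by apply: (addrI y); rewrite addr0 addrA; exact: y_max.
have := congr1 phi ctx0; rewrite linearD linearZ linear0 /=.
have := cone_phi_ge0 cc; have := mulr_gt0 t0 phi_x0; lra.
Qed.

Lemma exists_supporting_functional : exists psi : {linear V -> R | *%R},
  [/\ forall x, `|psi x| <= N x, psi y = 1 & forall c, cone c -> 0 <= psi c].
Proof.
have [psi [psi_le psiy]] := hahn_banach y cone_gauge_sublinear.
have psiN x : psi x <= N x := le_trans (psi_le x) (cone_gauge_leN x).
exists psi; split => [x||c cc]; last 1 first.
- by have := le_trans (psi_le (- c)) (cone_gauge_le _ cc); rewrite addNr N0 linearN oppr_le0.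
- by rewrite ler_norml psiN andbT lerNl -linearN -N_opp.
- by rewrite psiy cone_gauge_maximal.
Qed.

End MaximalPoint.

Lemma supporting_kernel_bound (psi : {linear V -> R | *%R}) x0 v :
  (forall c, cone c -> 0 <= psi c) -> psi x0 <= 1 -> N x0 <= 1 -> 1 < k * phi x0 ->
  phi v = 0 -> `|psi v| <= N v / (k * phi x0 - 1).
Proof.
move=> psi_cone psix0 Nx0; rewrite -subr_gt0; set D := k * phi x0 - 1 => D0.
have psi_lb w : phi w = 0 -> - psi w <= N w / D.
  move=> phiw; pose t := N w / D; have t0 : 0 <= t by rewrite divr_ge0 ?N_ge0 ?ltW.
  have : cone (w + t *: x0).
    rewrite /cone linearD linearZ phiw add0r /=.
    apply: le_trans (N_triangle _ _) _; rewrite NZ ger0_norm //.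
    have : t * N x0 <= t by rewrite ler_piMr.
    have : t * D = N w by rewrite /t mulfVK // gt_eqF.
    rewrite /D; nra.
  move/psi_cone; rewrite linearD linearZ /=.
  have : t * psi x0 <= t by rewrite ler_piMr.
  rewrite -/t; lra.
move=> phiv; rewrite ler_norml -lerNl psi_lb //=.
by have := psi_lb (- v); rewrite linearN phiv oppr0 N_opp linearN opprK; apply.
Qed.

End Cone.

Lemma kernel_decomposition (phi : {linear V -> R | *%R}) x0 x :
  (forall x, `|phi x| <= N x) -> 0 < phi x0 -> N x0 <= 1 -> exists v,
  [/\ x = v + (phi x / phi x0) *: x0, phi v = 0 & N v <= (1 + (phi x0)^-1) * N x].
Proof.
move=> phi_le phix0 Nx0; exists (x - (phi x / phi x0) *: x0); split.
- by rewrite subrK.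
- by rewrite linearB linearZ /= mulfVK ?gt_eqF // subrr.
apply: le_trans (N_triangle _ _) _; rewrite N_opp NZ mulrDl mul1r lerD2l normrM.
have ia0 : 0 <= (phi x0)^-1 by rewrite invr_ge0 ltW.
rewrite (ger0_norm ia0); apply: (@le_trans _ _ (`|phi x| * (phi x0)^-1)).
  by apply: ler_piMr => //; rewrite mulr_ge0.
by rewrite mulrC ler_wpM2l.
Qed.

Lemma close_of_kernel_bound (phi psi : {linear V -> R | *%R}) x0 (b g : R) :
  (forall x, `|phi x| <= N x) -> 0 < phi x0 -> N x0 <= 1 -> 0 <= b ->
  (forall v, phi v = 0 -> `|psi v| <= b * N v) -> `|psi x0 / phi x0 - 1| <= g ->
  forall x, `|psi x - phi x| <= (b * (1 + (phi x0)^-1) + g) * N x.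
Proof.
move=> phi_le phix0 Nx0 b0 psi_ker psix0 x.
have [v [xE phiv Nv]] := kernel_decomposition x phi_le phix0 Nx0.
have -> : psi x - phi x = psi v + phi x * (psi x0 / phi x0 - 1).
  by rewrite {1}xE linearD linearZ /=; ring.
apply: le_trans (ler_normD _ _) _; rewrite normrM mulrDl.
apply: lerD; first by apply: le_trans (psi_ker _ phiv) _; rewrite -mulrA ler_wpM2l.
by rewrite mulrC ler_pM ?normr_ge0.
Qed.

Lemma ratio_ge_of_kernel_bound (phi psi : {linear V -> R | *%R}) x0 y (b : R) :
  (forall x, `|phi x| <= N x) -> 0 < phi x0 -> N x0 <= 1 -> 0 <= psi x0 -> 0 <= b ->
  (forall v, phi v = 0 -> `|psi v| <= b * N v) -> N y = 1 -> psi y = 1 ->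
  1 - psi x0 / phi x0 <= b * (1 + (phi x0)^-1).
Proof.
move=> phi_le phix0 Nx0 psix0 b0 psi_ker Ny1 psiy.
have [v [yE phiv Nv]] := kernel_decomposition y phi_le phix0 Nx0.
have psiyE : 1 = psi v + phi y * (psi x0 / phi x0).
  by rewrite -psiy {1}yE linearD linearZ /=; ring.
have psiv : psi v <= b * (1 + (phi x0)^-1).
  apply: le_trans (ler_norm _) (le_trans (psi_ker v phiv) _).
  by rewrite ler_wpM2l //; move: Nv; rewrite Ny1 mulr1.
have : phi y * (psi x0 / phi x0) <= psi x0 / phi x0.
  by apply: ler_piMl; [rewrite divr_ge0 // ltW | rewrite -Ny1 (le_trans (ler_norm _))].
lra.
Qed.

Lemma ratio_le_of_gap (p A eps : R) : 0 < A -> A <= 1 -> p <= 1 -> 0 < eps -> eps < 1 ->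
  256%:R * (1 - A) < eps ^+ 2 -> p / A - 1 <= eps / 128%:R.
Proof.
move=> A0 A1 p1 eps0 eps1; rewrite expr2 => gap.
have iA_le : A^-1 <= 2.
  by have := mulfV (lt0r_neq0 A0); have := invr_gt0 A; rewrite A0; nra.
have : p / A <= A^-1 by rewrite ler_pdivrMr // mulVf ?gt_eqF.
have := mulfV (lt0r_neq0 A0); set iA := A^-1 in iA_le *; nra.
Qed.

Lemma bpb_error_bound (A D eps : R) : 0 < eps -> 1 <= 2 * A -> 31%:R <= eps * D ->
  D^-1 * (1 + A^-1) + (D^-1 * (1 + A^-1) + eps / 128%:R) <= eps / 2.
Proof.
move=> eps0 A2 epsD; have D0 : 0 < D by nra.
have A0 : 0 < A by lra.
have iA_le : A^-1 <= 2.
  by have := mulfV (lt0r_neq0 A0); have := invr_gt0 A; rewrite A0; nra.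
have iD_le : 31%:R * D^-1 <= eps.
  by have := mulfK (lt0r_neq0 D0) eps; have := invr_gt0 D; rewrite D0; nra.
have := invr_gt0 D; rewrite D0; set iA := A^-1 in iA_le *; set iD := D^-1 in iD_le *; nra.
Qed.

Theorem bishop_phelps_bollobas (phi : {linear V -> R | *%R}) x0 eps :
  (forall x, `|phi x| <= N x) -> 0 < eps < 1 -> N x0 <= 1 ->
  256%:R * (1 - phi x0) < eps ^+ 2 ->
  exists (psi : {linear V -> R | *%R}) y, [/\ forall x, `|psi x| <= N x, N y = 1, psi y = 1,
    forall x, `|psi x - phi x| <= eps / 2 * N x & N (y - x0) < eps].
Proof.
move=> phi_le /andP[eps0 eps1] Nx0; set A := phi x0 => phix0.
have phiN x : phi x <= N x := le_trans (ler_norm _) (phi_le x).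
have A_ge : 255%:R <= 256%:R * A by rewrite expr2 in phix0; nra.
have A0 : 0 < A by lra.
have A1 : A <= 1 := le_trans (phiN x0) Nx0.
(* [k] trades [N (y - x0) <= k (1 - A)] against the kernel bound [1 / (k A - 1)] *)
pose k := 64%:R / eps; have k0 : 0 < k by rewrite divr_gt0 ?ltr0n.
have epsk : eps * k = 64%:R by rewrite mulrC mulfVK ?gt_eqF.
have epskA : eps * (k * A) = 64%:R * A by rewrite mulrA epsk.
have kA1 : 1 < k * A by rewrite -(ltr_pM2l eps0) epskA; lra.
have cone_x0 : cone phi k x0 by rewrite /cone -/A; lra.
have [y [[Ny cone_yx0] y_max]] := cone_maximal_above phiN k0 Nx0.
have [psi [psi_le psiy psi_cone]] :=
  exists_supporting_functional k0 y_max Ny cone_x0 A0 Nx0.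
have Ny1 : N y = 1.
  by apply/eqP; rewrite eq_le Ny -{1}psiy (le_trans (ler_norm _) (psi_le y)).
have psix0 : psi x0 <= 1 := le_trans (ler_norm _) (le_trans (psi_le x0) Nx0).
set iD := (k * A - 1)^-1; have iD0 : 0 <= iD by rewrite invr_ge0 subr_ge0 ltW.
have ker_bound v : phi v = 0 -> `|psi v| <= iD * N v.
  by rewrite mulrC; exact: supporting_kernel_bound.
have ratio_ge :=
  ratio_ge_of_kernel_bound phi_le A0 Nx0 (psi_cone _ cone_x0) iD0 ker_bound Ny1 psiy.
have ratio_le := ratio_le_of_gap A0 A1 psix0 eps0 eps1 phix0.
exists psi, y; split => // [x|].
  have ratio : `|psi x0 / A - 1| <= iD * (1 + A^-1) + eps / 128%:R.
    have e0 : 0 <= eps / 128%:R by rewrite divr_ge0 ?ltW.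
    have b0 : 0 <= iD * (1 + A^-1) by rewrite mulr_ge0 // addr_ge0 // invr_ge0 ltW.
    by rewrite ler_norml; apply/andP; split; lra.
  apply: le_trans (close_of_kernel_bound phi_le A0 Nx0 iD0 ker_bound ratio x) _.
  by rewrite ler_wpM2r ?N_ge0 //; apply: bpb_error_bound => //; [lra | rewrite mulrBr epskA; lra].
have : N (y - x0) <= k * (1 - A).
  by apply: le_trans cone_yx0 _; rewrite ler_pM2l // linearB lerD2r -Ny1 phiN.
have : eps * (k * (1 - A)) < eps * eps by rewrite mulrA epsk; rewrite expr2 in phix0; lra.
by rewrite ltr_pM2l //; lra.
Qed.

End BishopPhelpsBollobas.

(* [X] as a real space, the reals acting through [iota]; [iota] is kept in the type so that
   the real module structure declared below is found by type inference *)
Definition realified (R : realType) (K : numFieldType) (iota : {rmorphism R -> K})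
  (X : completeNormedModType K) : Type := X.

(* The scalar field [K] is either [R], with [iota] and [rp] the identity, or [R[i]], with
   [iota] the real embedding and [rp] the real part. *)
Section RealPart.
Variables (R : realType) (K : numFieldType) (iota : {rmorphism R -> K}) (rp : K -> R)
  (re : K -> K).
Hypotheses (iota_le : {mono iota : a b / a <= b})
  (iota_norm : forall a, `|iota a| = iota `|a|)
  (rp_iota : cancel iota rp)
  (rpD : {morph rp : z w / z + w})
  (rpM : forall a z, rp (iota a * z) = a * rp z)
  (norm_real : forall z : K, `|z| = iota (rp `|z|))
  (rp_le_norm : forall z : K, rp z <= rp `|z|)
  (eq_of_rp : forall (z : K) a, rp z = a -> `|z| <= iota a -> z = iota a)
  (phase : forall z : K, exists2 u, `|u| = 1 & u * z = `|z|)
  (re_def : forall z : K, re z = iota (rp z)).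

Lemma iota_lt : {mono iota : a b / a < b}.
Proof. exact: leW_mono. Qed.

Lemma iota_inj : injective iota.
Proof. exact: inc_inj. Qed.

Lemma rp0 : rp 0 = 0.
Proof. by rewrite -(rmorph0 iota) rp_iota. Qed.

Lemma rpN z : rp (- z) = - rp z.
Proof. by apply/eqP; rewrite -subr_eq0 opprK -rpD addNr rp0. Qed.

Lemma rpB z w : rp (z - w) = rp z - rp w.
Proof. by rewrite rpD rpN. Qed.

Lemma rp_norm (z : K) : `|rp z| <= rp `|z|.
Proof.
by rewrite ler_norml rp_le_norm andbT lerNl -rpN; have := rp_le_norm (- z); rewrite normrN.
Qed.

Lemma real_ge0 (z : K) : 0 <= z -> z = iota (rp z).
Proof. by move=> z0; have := norm_real z; rewrite ger0_norm. Qed.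

Section Space.
Variable X : completeNormedModType K.

Local Notation Xr := (realified iota X).
HB.instance Definition _ := GRing.Zmodule.on Xr.

Definition rscale (a : R) (v : Xr) : Xr := iota a *: (v : X).

Lemma rscaleA a b v : rscale a (rscale b v) = rscale (a * b) v.
Proof. by rewrite /rscale scalerA rmorphM. Qed.

Lemma rscale1 v : rscale 1 v = v.
Proof. by rewrite /rscale rmorph1 scale1r. Qed.

Lemma rscaleDr a u v : rscale a (u + v) = rscale a u + rscale a v.
Proof. exact: scalerDr. Qed.

Lemma rscaleDl v a b : rscale (a + b) v = rscale a v + rscale b v.
Proof. by rewrite /rscale rmorphD scalerDl. Qed.

HB.instance Definition _ :=
  GRing.Zmodule_isLmodule.Build R Xr rscaleA rscale1 rscaleDr rscaleDl.

Definition rnorm (v : Xr) : R := rp `|v : X|.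

Lemma normE v : `|v| = iota (rnorm v).
Proof. exact: real_ge0. Qed.

Lemma rnorm_ge0 v : 0 <= rnorm v.
Proof. by rewrite -iota_le rmorph0 -normE. Qed.

Lemma rnorm_triangle (v w : Xr) : rnorm (v + w) <= rnorm v + rnorm w.
Proof. by rewrite -iota_le rmorphD -!normE ler_normD. Qed.

Lemma rnormZ a (v : Xr) : rnorm (a *: v) = `|a| * rnorm v.
Proof. by apply: iota_inj; rewrite rmorphM -!normE normrZ iota_norm. Qed.

Lemma rnorm_eq0 v : rnorm v = 0 -> v = 0.
Proof. by move=> v0; apply/eqP; rewrite -normr_eq0 normE v0 rmorph0. Qed.

Lemma rnorm_complete (u : nat -> Xr) :
  N_cauchy rnorm u -> exists l, N_cvg_to rnorm u l.
Proof.
move=> u_cauchy.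
have : cvg (u @ \oo).
  apply: cauchy_cvg; apply: cauchy_exP => e e0.
  have rpe0 : 0 < rp e by rewrite -iota_lt rmorph0 -real_ge0 ?ltW.
  have [M uM] := u_cauchy _ rpe0.
  exists (u M), M => // n Mn /=.
  by rewrite -ball_normE /= normE (real_ge0 (ltW e0)) iota_lt; exact: uM.
move=> /cvgrPdist_lt u_cvg; exists (lim (u @ \oo)) => e e0.
have iota_e0 : 0 < iota e by rewrite -(rmorph0 iota) iota_lt.
have [M _ uM] := u_cvg _ iota_e0.
by exists M => n Mn; rewrite -iota_lt -normE -normrN opprB; exact: uM.
Qed.

Lemma rp_le_rnorm (z : K) (v : Xr) : `|z| <= `|v : X| -> `|rp z| <= rnorm v.
Proof. by move=> zv; apply: le_trans (rp_norm _) _; rewrite -iota_le -norm_real -normE. Qed.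

Lemma norm_le_of_rp_bound (L : X -> K) c : linear_for *%R L ->
  (forall v, `|rp (L v)| <= c * rnorm v) -> forall v, `|L v| <= iota c * `|v|.
Proof.
move=> L_lin L_le v; have [u u1 uLv] := phase (L v).
have L0 : L 0 = 0.
  by apply: (addrI (L 0)); have := L_lin 1 0 0; rewrite scaler0 !addr0 mul1r.
have LZ : L (u *: v) = u * L v by have := L_lin u v 0; rewrite !addr0 L0 addr0.
have := L_le (u *: v); rewrite LZ uLv /rnorm normrZ u1 mul1r.
move/(le_trans (ler_norm _)) => Lv_le.
by rewrite norm_real (normE v) -rmorphM iota_le.
Qed.

Lemma real_part_functional (f : {scalar X}) :
  exists phi : {linear Xr -> R | *%R}, forall v, phi v = rp (f v).
Proof.
apply: linear_for_scalar => a u v.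
by change (rp (f (iota a *: u + v)) = a * rp (f u) + rp (f v)); rewrite linearP rpD rpM.
Qed.

Lemma dnorm_is_bound (f : {scalar X}) c : dnorm_is f c -> forall v, `|f v| <= c * `|v|.
Proof.
move=> [f_le _] v; have [->|v0] := eqVneq v 0; first by rewrite linear0 !normr0 mulr0.
have v1 : `| `|v|^-1 *: v| <= 1 by rewrite normfZV.
have := f_le _ v1; rewrite linearZ /= normrM normfV normr_id.
by rewrite ler_pdivrMl ?normr_gt0 // mulrC.
Qed.

Lemma dnorm_is_of_bound (L : X -> K) (b : R) : 0 <= b -> L 0 = 0 ->
  (forall v, `|L v| <= iota b * `|v|) -> exists2 c, dnorm_is L c & c <= iota b.
Proof.
move=> b0 L0 L_le.
pose S := [set rp `|L v| | v in [set v : X | `|v| <= 1]].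
have S0 : S !=set0 by exists (rp `|L 0|), 0; rewrite /= ?normr0 ?ler01.
have Sb : ubound S b.
  move=> _ [v v1 <-]; rewrite -iota_le -norm_real; apply: le_trans (L_le v) _.
  by rewrite ler_piMr // -(rmorph0 iota) iota_le.
have supS : has_sup S by split => //; exists b.
exists (iota (sup S)); last by rewrite iota_le; exact: ge_sup.
split=> [v v1|d d_ub]; first by rewrite norm_real iota_le; apply: sup_upper_bound => //; exists v.
have d0 : 0 <= d by have := d_ub 0; rewrite normr0 ler01 L0 normr0; apply.
rewrite (real_ge0 d0) iota_le; apply: ge_sup S0 _ => _ [v v1 <-].
by rewrite -iota_le -norm_real -real_ge0 //; exact: d_ub.
Qed.

Lemma continuous_of_norm_le (L : {scalar X}) : (forall v, `|L v| <= `|v|) -> continuous L.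
Proof.
move=> L_le v; apply/cvgrPdist_lt => e e0.
have /cvgrPdist_lt/(_ e e0) := @cvg_id _ (nbhs v).
by apply: filterS => w; rewrite -linearB; exact: le_lt_trans (L_le _).
Qed.

Lemma dnorm_lt_sub (G f : {scalar X}) (b : R) e : 0 <= b -> iota b < e ->
  (forall v, `|rp (G v) - rp (f v)| <= b * rnorm v) -> dnorm_lt (G \- f) e.
Proof.
move=> b0 be Gf_le.
have Gf_lin : linear_for *%R (G \- f) by move=> a u v; rewrite /= (linearP G) (linearP f); ring.
have Gf0 : (G \- f) 0 = 0 by rewrite /= (linear0 G) (linear0 f) subr0.
have Gf_rp v : `|rp ((G \- f) v)| <= b * rnorm v by rewrite /= rpB.
have [c Gf_c cb] := dnorm_is_of_bound b0 Gf0 (norm_le_of_rp_bound Gf_lin Gf_rp).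
by exists c; split => //; exact: le_lt_trans cb be.
Qed.

Section StronglyExposing.
Variables (h : {scalar X}) (y : X).
Hypothesis h_exp : strongly_exposes re h y.

Lemma strongly_exposes_rp_le v : `|v| <= 1 -> rp (h v) <= rp (h y).
Proof. by case: h_exp => _ [[_ h_sup] _] v1; rewrite -iota_le -!re_def; exact: h_sup. Qed.

Lemma strongly_exposes_rp_bound v : `|rp (h v)| <= rp (h y) * rnorm v.
Proof.
suff h_le w : rp (h w) <= rp (h y) * rnorm w.
  by rewrite ler_norml h_le andbT lerNl -rpN -linearN; have := h_le (- v); rewrite /rnorm normrN.
have [->|w0] := eqVneq w 0; first by rewrite linear0 rp0 /rnorm normr0 rp0 mulr0.
have nw : 0 < rnorm w by rewrite -iota_lt rmorph0 -normE normr_gt0.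
have w1 : `|iota (rnorm w)^-1 *: w| <= 1.
  by rewrite normrZ normE iota_norm -rmorphM gtr0_norm ?invr_gt0 // mulVf ?gt_eqF ?rmorph1.
have := strongly_exposes_rp_le w1.
by rewrite linearZ /= rpM ler_pdivrMl // mulrC.
Qed.

Hypothesis y1 : `|y| = 1.

Lemma strongly_exposes_rp_gt0 : 0 < rp (h y).
Proof.
have c0 : 0 <= rp (h y) by rewrite -rp0 -(linear0 h) strongly_exposes_rp_le ?normr0.
rewrite lt_def c0 andbT; apply/eqP => c_eq0.
have Ny1 n : `|(fun _ : nat => - y) n| <= 1 by rewrite normrN y1.
have hNy : re (h ((fun _ : nat => - y) n)) @[n --> \oo] --> re (h y).
  have -> : re (h (- y)) = re (h y) by rewrite !re_def linearN rpN c_eq0 oppr0.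
  exact: cvg_cst.
have [_ [_ h_seq]] := h_exp.
have /cvgrPdist_lt/(_ 1 ltr01) [M _ yM] := h_seq _ Ny1 hNy.
by have := yM M (leqnn M); rewrite /= opprK -mulr2n normrMn y1 ltrn1.
Qed.

Lemma strongly_exposes_norm :
  h y = iota (rp (h y)) /\ forall v, `|h v| <= iota (rp (h y)) * `|v|.
Proof.
have h_le := norm_le_of_rp_bound (@linearP _ _ _ _ h) strongly_exposes_rp_bound.
split=> //; apply: eq_of_rp => //.
by have := h_le y; rewrite y1 mulr1.
Qed.

End StronglyExposing.

Lemma strongly_exposes_of_gap_le (G h : {scalar X}) y (C : R) :
  continuous G -> attains_sup_re re G y -> strongly_exposes re h y -> 0 < C ->
  (forall v, `|v| <= 1 -> rp (h y) - rp (h v) <= C * (rp (G y) - rp (G v))) ->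
  strongly_exposes re G y.
Proof.
move=> G_cont G_sup h_exp C0 gap; split=> //; split=> // u u1 Gu.
have [_ [_ h_seq]] := h_exp; apply: h_seq => //; apply/cvgrPdist_lt => e e0.
have iC0 : 0 < iota C by rewrite -(rmorph0 iota) iota_lt.
move/cvgrPdist_lt: Gu => /(_ _ (divr_gt0 e0 iC0)); apply: filterS => n.
rewrite !re_def -!rmorphB !iota_norm ltr_pdivlMr // => Gn; apply: le_lt_trans Gn.
rewrite -rmorphM iota_le mulrC !ger0_norm ?subr_ge0; first exact: gap.
- by case: G_sup => _ G_le; rewrite -iota_le -!re_def; exact: G_le.
- exact: strongly_exposes_rp_le.
Qed.

Lemma norm_perturbed_le (s t c p q n : R) : 0 < s -> 0 < t -> s * (1 + t * c) = 1 ->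
  `|p| <= n -> `|q| <= c * n -> `|s * (p + t * q)| <= n.
Proof.
move=> s0 t0 st1 pn qn; rewrite normrM gtr0_norm //.
apply: le_trans (ler_wpM2l (ltW s0) (ler_normD _ _)) _; rewrite normrM gtr0_norm //.
have : t * `|q| <= t * (c * n) by rewrite ler_pM2l.
have := normr_ge0 q; have := normr_ge0 p; nra.
Qed.

Lemma perturb_strongly_exposes (g h : {scalar X}) y (s t : R) :
  `|y| = 1 -> (forall v, `|g v| <= `|v|) -> g y = 1 -> strongly_exposes re h y ->
  0 < s -> 0 < t -> s * (1 + t * rp (h y)) = 1 ->
  exists G : {scalar X}, [/\ strongly_exposes re G y, forall v, `|G v| <= `|v|, G y = 1 &
    forall v, rp (G v) = s * (rp (g v) + t * rp (h v))].
Proof.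
move=> y1 g_le gy h_exp s0 t0; set c := rp (h y) => st1.
have [hy _] := strongly_exposes_norm h_exp y1.
have h_rp := strongly_exposes_rp_bound h_exp.
have g_rp v : `|rp (g v)| <= rnorm v := rp_le_rnorm (g_le v).
have [G GE] : exists G : {scalar X}, G =1 fun v => iota s * (g v + iota t * h v).
  by apply: linear_for_scalar => a u v; rewrite !linearP /=; ring.
have rpG v : rp (G v) = s * (rp (g v) + t * rp (h v)) by rewrite GE rpM rpD rpM.
have Gy : G y = 1.
  by rewrite GE gy hy -/c; have := congr1 iota st1; rewrite rmorphM rmorphD rmorphM !rmorph1.
have G_le v : `|G v| <= `|v|.
  rewrite -[leRHS]mul1r -(rmorph1 iota).
  apply: norm_le_of_rp_bound (@linearP _ _ _ _ G) _ v => w.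
  by rewrite rpG mul1r; exact: norm_perturbed_le (g_rp w) (h_rp w).
have rpGy : rp (G y) = 1 by rewrite Gy -(rmorph1 iota) rp_iota.
exists G; split => //.
apply: (strongly_exposes_of_gap_le (C := (s * t)^-1)) h_exp _ _.
- exact: continuous_of_norm_le.
- split; first by rewrite y1.
  move=> v v1; rewrite !re_def rpGy rmorph1.
  apply: le_trans (_ : iota (rp `|G v|) <= 1); first by rewrite iota_le rp_le_norm.
  by rewrite -norm_real (le_trans (G_le v) v1).
- by rewrite invr_gt0 mulr_gt0.
- move=> v v1; rewrite rpGy rpG ler_pdivlMl ?mulr_gt0 //.
  have : rp (g v) <= 1.
    by apply: le_trans (ler_norm _) (le_trans (g_rp v) _); rewrite -iota_le -normE rmorph1.
  rewrite -/c; nra.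
Qed.

Lemma exists_strongly_exposing_near (g : {scalar X}) y (d : R) :
  strongly_exposed_point re y -> `|y| = 1 -> (forall v, `|g v| <= `|v|) -> g y = 1 -> 0 < d ->
  exists G : {scalar X}, [/\ strongly_exposes re G y, forall v, `|G v| <= `|v|, G y = 1 &
    forall v, `|rp (G v) - rp (g v)| <= 2 * d * rnorm v].
Proof.
move=> [h h_exp] y1 g_le gy d0.
have c0 := strongly_exposes_rp_gt0 h_exp y1; set c := rp (h y) in c0.
have [s s0 sd] : exists2 s, 0 < s & s * (1 + d) = 1.
  by exists (1 + d)^-1; rewrite ?invr_gt0 ?addr_gt0 ?mulVf ?gt_eqF ?addr_gt0.
have [t t0 tc] : exists2 t, 0 < t & t * c = d.
  by exists (d / c); rewrite ?divr_gt0 ?mulfVK ?gt_eqF.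
have st1 : s * (1 + t * c) = 1 by rewrite tc.
have [G [G_exp G_le Gy rpG]] := perturb_strongly_exposes y1 g_le gy h_exp s0 t0 st1.
exists G; split => // v; rewrite rpG.
have g_rp : `|rp (g v)| <= rnorm v := rp_le_rnorm (g_le v).
have h_rp : `|rp (h v)| <= c * rnorm v := strongly_exposes_rp_bound h_exp v.
set p := rp (g v) in g_rp *; set q := rp (h v) in h_rp *.
have -> : s * (p + t * q) - p = s * (t * q - d * p) by rewrite -[X in _ - X]mul1r -sd; ring.
rewrite normrM gtr0_norm //; apply: le_trans (ler_wpM2l (ltW s0) (ler_normB _ _)) _.
rewrite !normrM (gtr0_norm t0) (gtr0_norm d0).
apply: (@le_trans _ _ (s * (2 * d * rnorm v))).
  have tq : t * `|q| <= d * rnorm v by rewrite -tc -mulrA ler_pM2l.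
  have dp : d * `|p| <= d * rnorm v by rewrite ler_pM2l.
  by apply: ler_wpM2l; [exact: ltW | lra].
by apply: ler_piMl; [rewrite !mulr_ge0 ?rnorm_ge0 ?ltW | nra].
Qed.

Lemma dnorm_is_one (G : {scalar X}) y :
  (forall v, `|G v| <= `|v|) -> `|y| = 1 -> G y = 1 -> dnorm_is G 1.
Proof.
move=> G_le y1 Gy; split=> [v v1|d d_ub]; first exact: le_trans (G_le v) v1.
by have := d_ub y; rewrite y1 Gy normr1; apply.
Qed.

Hypothesis complexify : forall psi : {linear Xr -> R | *%R},
  exists g : {scalar X}, forall v, rp (g v) = psi v.

Lemma complexify_norming (psi : {linear Xr -> R | *%R}) y :
  (forall v, `|psi v| <= rnorm v) -> rnorm y = 1 -> psi y = 1 ->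
  exists g : {scalar X}, [/\ forall v, rp (g v) = psi v, forall v, `|g v| <= `|v| & g y = 1].
Proof.
move=> psi_le y1 psiy; have [g g_psi] := complexify psi.
have g_le v : `|g v| <= `|v|.
  have := norm_le_of_rp_bound (c := 1) (@linearP _ _ _ _ g) _ v; rewrite rmorph1 mul1r.
  by apply=> w; rewrite g_psi mul1r.
exists g; split=> //; rewrite -(rmorph1 iota); apply: eq_of_rp; first by rewrite g_psi.
by rewrite rmorph1 -[leRHS](rmorph1 iota) -y1 -normE.
Qed.

Theorem property_P_of_strongly_exposed :
  (forall x : X, `|x| = 1 -> strongly_exposed_point re x) -> property_P X re.
Proof.
move=> SE_sphere; exists (fun e => e * e / 256%:R); split=> [e /andP[e0 _]|e /andP[e0 e1]].
  by rewrite divr_gt0 ?mulr_gt0 ?ltr0n.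
move=> x f _ x1 f1 fx.
pose eps := rp e; have eE : e = iota eps := real_ge0 (ltW e0).
have eps01 : 0 < eps < 1 by rewrite -2!iota_lt rmorph0 rmorph1 -eE e0 e1.
have [phi phiE] := real_part_functional f.
have phi_le v : `|phi v| <= rnorm v.
  by rewrite phiE rp_le_rnorm // -[leRHS]mul1r; exact: dnorm_is_bound f1 v.
have phix : 256%:R * (1 - phi x) < eps ^+ 2.
  have : iota (1 - eps * eps / 256%:R) = 1 - e * e / 256%:R.
    by rewrite eE rmorphB rmorph1 fmorph_div rmorphM rmorph_nat.
  move: fx => /[swap] <-; rewrite re_def iota_lt -phiE expr2; lra.
have x1' : rnorm x <= 1 by rewrite /rnorm x1 -(rmorph1 iota) rp_iota.
have [psi [y [psi_le y1 psiy psi_phi yx]]] :=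
  bishop_phelps_bollobas rnorm_ge0 rnorm_triangle rnormZ rnorm_eq0 rnorm_complete
    phi_le eps01 x1' phix.
have [g [g_psi g_le gy]] := complexify_norming psi_le y1 psiy.
have y1' : `|y| = 1 by rewrite normE y1 rmorph1.
have [eps0 _] := andP eps01; have d0 : 0 < eps / 8%:R by rewrite divr_gt0 ?ltr0n.
have [G [G_exp G_le Gy G_g]] :=
  exists_strongly_exposing_near (SE_sphere y y1') y1' g_le gy d0.
exists G, y; split; first by exists y.
split=> //; split; first exact: dnorm_is_one G_le y1' Gy.
split=> //; split; last by rewrite normE eE iota_lt.
apply: (dnorm_lt_sub (b := 3%:R * eps / 4%:R)).
- by rewrite divr_ge0 ?mulr_ge0 ?ler0n ?ltW.
- by rewrite eE iota_lt; lra.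
move=> v; rewrite -phiE.
have -> : rp (G v) - phi v = rp (G v) - rp (g v) + (psi v - phi v) by rewrite g_psi; ring.
apply: le_trans (ler_normD _ _) _; have := G_g v; have := psi_phi v; have := rnorm_ge0 v.
lra.
Qed.

End Space.
End RealPart.

Lemma real_property_P (R : realType) (X : completeNormedModType R) :
  (forall x : X, `|x| = 1 -> strongly_exposed_point (@re_real R) x) ->
  property_P X (@re_real R).
Proof.
apply: (@property_P_of_strongly_exposed R R idfun id) => //=.
- exact: ler_norm.
- move=> z; have [z0|z0] := leP 0 z.
    by exists 1; rewrite ?normr1 ?mul1r ?ger0_norm.
  by exists (-1); rewrite ?normrN1 ?mulN1r ?ltr0_norm.
- by move=> psi; apply: linear_for_scalar; exact: (linearP psi).
Qed.

Section ComplexScalars.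
Variable R : realType.
Local Open Scope complex_scope.
Implicit Types (a : R) (z w : R[i]).

Lemma normc_real a : `|a%:C| = `|a|%:C.
Proof. by rewrite normc_def /= expr0n /= addr0 sqrtr_sqr. Qed.

Lemma Re_add z w : complex.Re (z + w) = complex.Re z + complex.Re w.
Proof. by case: z => ? ?; case: w => ? ?. Qed.

Lemma Re_real_mul a z : complex.Re (a%:C * z) = a * complex.Re z.
Proof. by case: z => x y /=; rewrite mul0r subr0. Qed.

Lemma normc_Re z : `|z| = (complex.Re `|z|)%:C.
Proof. by rewrite normc_def. Qed.

Lemma Re_le_normc z : complex.Re z <= complex.Re `|z|.
Proof. by have := normc_ge_Re z; rewrite normc_Re lecR; exact: le_trans (ler_norm _). Qed.

Lemma eq_real_of_Re z a : complex.Re z = a -> `|z| <= a%:C -> z = a%:C.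
Proof.
case: z => x y /= <-; rewrite normc_def lecR /= => xy_le.
have x0 : 0 <= x by apply: le_trans xy_le; exact: sqrtr_ge0.
move: xy_le; rewrite -{2}(ger0_norm x0) -sqrtr_sqr ler_sqrt ?sqr_ge0 // => xy_le.
have : y ^+ 2 <= 0 by lra.
by rewrite le_eqVlt ltNge sqr_ge0 orbF sqrf_eq0 => /eqP ->.
Qed.

Lemma complex_phase z : exists2 u, `|u| = 1 & u * z = `|z|.
Proof.
have [->|z0] := eqVneq z 0; first by exists 1; rewrite ?normr1 ?mulr0 ?normr0.
have nz0 : `|z| != 0 by rewrite normr_eq0.
exists (z^* / `|z|); first by rewrite normrM normfV normcJ normr_id mulfV.
by rewrite mulrAC (mulrC _ z) -sqr_normc expr2 mulfK.
Qed.

Lemma re_cplxE z : re_cplx z = (complex.Re z)%:C.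
Proof. by rewrite /re_cplx ReJ_add Num.Theory.ReE. Qed.

(* [g v = psi v - i psi (i v)], the usual complexification of a real functional *)
Lemma complexify_functional (X : completeNormedModType R[i])
    (psi : {linear realified (real_complex R) X -> R | *%R}) :
  exists g : {scalar X}, forall v, complex.Re (g v) = psi v.
Proof.
have psiP a u v : psi (a%:C *: u + v) = a * psi u + psi v := linearP psi a u v.
have psiD u v : psi (u + v) = psi u + psi v by have := psiP 1 u v; rewrite scale1r mul1r.
have psiZ a u : psi (a%:C *: u) = a * psi u.
  by have := psiP a u 0; rewrite !addr0 linear0 addr0.
have scaleE (b : R[i]) (u : X) :
    b *: u = (complex.Re b)%:C *: u + (complex.Im b)%:C *: ('i *: u).
  by rewrite scalerA -scalerDl (mulrC _ 'i) -complexE.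
pose F v := (psi v)%:C - 'i * (psi ('i *: v))%:C.
have [g gF] : exists g : {scalar X}, g =1 F.
  apply: linear_for_scalar => a u v.
  rewrite /F scalerDr !psiD scalerA (scaleE a u) (scaleE ('i * a) u) !psiD !psiZ.
  case: a => a1 a2 /=; apply/eqP; rewrite eq_complex /=; apply/andP; split; apply/eqP; ring.
by exists g => v; rewrite gF /F /=; ring.
Qed.

End ComplexScalars.

Lemma complex_property_P (R : realType) (X : completeNormedModType R[i]) :
  (forall x : X, `|x| = 1 -> strongly_exposed_point (@re_cplx R) x) ->
  property_P X (@re_cplx R).
Proof.
apply: (@property_P_of_strongly_exposed R R[i] (real_complex R) (@complex.Re R)).
- by move=> a b; rewrite lecR.
- exact: normc_real.
- by [].
- exact: Re_add.
- exact: Re_real_mul.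
- exact: normc_Re.
- exact: Re_le_normc.
- exact: eq_real_of_Re.
- exact: complex_phase.
- exact: re_cplxE.
- exact: complexify_functional.
Qed.

Theorem proposition3p11 :
  (forall (R : realType) (X : completeNormedModType R),
     (forall x : X, `|x| = 1 -> @strongly_exposed_point R X (@re_real R) x) ->
     @property_P R X (@re_real R)) /\
  (forall (R : realType) (X : completeNormedModType R[i]),
     (forall x : X, `|x| = 1 -> @strongly_exposed_point R[i] X (@re_cplx R) x) ->
     @property_P R[i] X (@re_cplx R)).
Proof. split; [exact: real_property_P | exact: complex_property_P]. Qed.
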